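(* Let $J,\mu\in\mathbb{R}$, $\Delta\neq0$, $T>0$, and let $(\kappa_l)_{l\ge1}$ be any real sequence. There is a constant $C$ depending only on $J,\mu,\Delta,T$ (not on $N$, $k$ or $\kappa$) such that for every even $N\ge4$ and every $k\in\{(2n+1)\pi/N:n=0,\dots,N-1\}$ with $\epsilon(k)>0$, $$\Big|\mathscr{E}_\Delta(k)-\tfrac{T}{2}|f_N(k)|\Big|\le C .$$ Consequently, with $\gamma(N)=\sum_{n=0}^{N-1}|f_N(k_n)|$ and the uncontrolled quantum Fisher information $I(\Delta)=\big(\sum_k\mathscr{E}_\Delta(k)\big)^2$ (sum over those $k$ with $\epsilon(k)>0$, all others having $f_N(k)=0$), one has $\big|\sqrt{I(\Delta)}-T\gamma(N)/2\big|\le CN$; hence the divergence near $k=0$ and the leading scaling with $N$ are the same as for the optimally controlled value $I_0(\Delta)=[\gamma(N)/2]^2T^2$ whenever $\gamma(N)$ grows at least linearly in $N$.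
   Context: Let $f_N(k)=2\sum_{l=1}^{N/2-1}\kappa_l\sin(kl)+\kappa_{N/2}$ and $\epsilon(k)=\sqrt{[\Delta f_N(k)/2]^2+(J\cos k+\mu)^2}$ (the Bogoliubov quasiparticle energy of the long-range Kitaev chain). For a parameter $\theta$, given real functions $a_\theta(k)$ and $\xi_\theta(k)$, set $$\mathscr{E}_\theta(k)=\Big\{T^2a_\theta(k)^2+\tfrac14\xi_\theta(k)^2\sin^2[2\epsilon(k)T]+\tfrac14\xi_\theta(k)^2\big(1-\cos[2\epsilon(k)T]\big)^2\Big\}^{1/2},$$ the single-mode eigenvalues of the estimation generator. For $\theta=\Delta$: $a_\Delta(k)=\partial_\Delta\epsilon(k)=\Delta f_N(k)^2/[4\epsilon(k)]$ and $\xi_\Delta(k)=-(J\cos k+\mu)f_N(k)/[2\epsilon(k)^2]$. *)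

From Stdlib Require Import Reals Lra Lia Arith.
Open Scope R_scope.

Fixpoint sum1 (F : nat -> R) (m : nat) : R :=
  match m with
  | O => 0
  | S m' => sum1 F m' + F m
  end.

Fixpoint sum0 (F : nat -> R) (m : nat) : R :=
  match m with
  | O => 0
  | S m' => sum0 F m' + F m'
  end.

(* f_N(k) = 2 sum_{l=1}^{N/2-1} kappa_l sin(k l) + kappa_{N/2};
   kappa : nat -> R is indexed from 1 (kappa 0 is never used). *)
Definition fN (kappa : nat -> R) (N : nat) (k : R) : R :=
  2 * sum1 (fun l => kappa l * sin (k * INR l)) (Nat.div N 2 - 1) + kappa (Nat.div N 2).

Definition eps (J mu D : R) (kappa : nat -> R) (N : nat) (k : R) : R :=
  sqrt ((D * fN kappa N k / 2) ^ 2 + (J * cos k + mu) ^ 2).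

Definition scrE (T a xi e : R) : R :=
  sqrt (T ^ 2 * a ^ 2 + / 4 * xi ^ 2 * (sin (2 * e * T)) ^ 2
        + / 4 * xi ^ 2 * (1 - cos (2 * e * T)) ^ 2).

Definition aD (J mu D : R) kappa N k : R :=
  D * (fN kappa N k) ^ 2 / (4 * eps J mu D kappa N k).

Definition xiD (J mu D : R) kappa N k : R :=
  - (J * cos k + mu) * fN kappa N k / (2 * (eps J mu D kappa N k) ^ 2).

Definition EDelta (J mu D T : R) kappa N k : R :=
  scrE T (aD J mu D kappa N k) (xiD J mu D kappa N k) (eps J mu D kappa N k).

Definition kmom (N n : nat) : R := INR (2 * n + 1) * PI / INR N.

Definition gammaN kappa N : R := sum0 (fun n => Rabs (fN kappa N (kmom N n))) N.

Definition QFI (J mu D T : R) kappa N : R :=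
  (sum0 (fun n => if Rlt_dec 0 (eps J mu D kappa N (kmom N n))
                  then EDelta J mu D T kappa N (kmom N n) else 0) N) ^ 2.

From Stdlib Require Import Reals Lra Lia Arith.
Open Scope R_scope.

(* Using sin^2 + cos^2 = 1, the radicand of the single-mode
   eigenvalue scrE T a xi e equals (T|a|)^2 + xi^2 (1 - cos(2eT))/2, so
       T|a| <= scrE T a xi e <= T|a| + |xi|.
   For theta = Delta write p = |Delta f/2|, q = |J cos k + mu| and
   eps = sqrt(p^2 + q^2); then |a_Delta| = p^2/(|Delta| eps),
   |f|/2 = p/|Delta| and |xi_Delta| = p q/(|Delta| eps^2).  The elementary
   bounds p <= eps <= p + q and 2pq <= eps^2 give
       |f|/2 - q/|Delta| <= |a_Delta| <= |f|/2,   |xi_Delta| <= 1/(2|Delta|),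
   and with q <= |J| + |mu| the mode-wise estimate follows with
   C = T(|J|+|mu|)/|Delta| + 1/(2|Delta|).  Modes with eps = 0 have f_N = 0,
   so they contribute 0 to both sums; summing the N mode-wise deviations
   (and sqrt(S^2) = S for the nonnegative sum S) gives the bound C N. *)

Lemma sqrt_sq_plus_bounds u v w :
  0 <= u -> 0 <= v -> 0 <= w <= v ^ 2 -> u <= sqrt (u ^ 2 + w) <= u + v.
Proof.
  intros hu hv hw. split.
  - rewrite <- (sqrt_pow2 u) at 1 by exact hu. apply sqrt_le_1_alt. lra.
  - rewrite <- (sqrt_pow2 (u + v)) by lra. apply sqrt_le_1_alt. nra.
Qed.

Lemma scrE_radicand T a xi e :
  T ^ 2 * a ^ 2 + / 4 * xi ^ 2 * sin (2 * e * T) ^ 2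
    + / 4 * xi ^ 2 * (1 - cos (2 * e * T)) ^ 2
  = (T * Rabs a) ^ 2 + xi ^ 2 * ((1 - cos (2 * e * T)) / 2).
Proof.
  assert (hsc := sin2_cos2 (2 * e * T)). unfold Rsqr in hsc.
  replace ((T * Rabs a) ^ 2) with (T ^ 2 * Rabs a ^ 2) by ring.
  rewrite pow2_abs.
  replace (sin (2 * e * T) ^ 2) with (1 - cos (2 * e * T) ^ 2) by (simpl; lra).
  field.
Qed.

Lemma scrE_bounds T a xi e : 0 <= T ->
  T * Rabs a <= scrE T a xi e <= T * Rabs a + Rabs xi.
Proof.
  intros hT. unfold scrE. rewrite scrE_radicand.
  assert (hcos := COS_bound (2 * e * T)).
  assert (hxi := pow2_ge_0 xi).
  apply (sqrt_sq_plus_bounds _ (Rabs xi)).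
  - apply Rmult_le_pos; [exact hT | apply Rabs_pos].
  - apply Rabs_pos.
  - rewrite pow2_abs. nra.
Qed.

Lemma Rabs_div x y : Rabs (x / y) = Rabs x / Rabs y.
Proof. unfold Rdiv. rewrite Rabs_mult, Rabs_inv. reflexivity. Qed.

Lemma hypot_bounds p q : 0 <= p -> 0 <= q ->
  p <= sqrt (p ^ 2 + q ^ 2) <= p + q /\ 2 * p * q <= sqrt (p ^ 2 + q ^ 2) ^ 2.
Proof.
  intros hp hq. split.
  - apply sqrt_sq_plus_bounds; [exact hp | exact hq | split; [apply pow2_ge_0 | lra]].
  - assert (hsq := pow2_ge_0 (p - q)).
    rewrite pow2_sqrt by (apply Rplus_le_le_0_compat; apply pow2_ge_0). nra.
Qed.

(* Bounds on a_Delta and xi_Delta for one mode, written in terms of f = f_N(k),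
   c = J cos k + mu and e = epsilon(k) > 0. *)
Lemma Delta_mode_bounds D f c e : D <> 0 ->
  e = sqrt ((D * f / 2) ^ 2 + c ^ 2) -> 0 < e ->
  Rabs f / 2 - Rabs c / Rabs D <= Rabs (D * f ^ 2 / (4 * e)) <= Rabs f / 2 /\
  Rabs (- c * f / (2 * e ^ 2)) <= / (2 * Rabs D).
Proof.
  intros hD he_eq he.
  assert (hDp : 0 < Rabs D) by (apply Rabs_pos_lt; exact hD).
  set (p := Rabs (D * f / 2)). set (q := Rabs c).
  assert (hp : 0 <= p) by apply Rabs_pos. assert (hq : 0 <= q) by apply Rabs_pos.
  assert (he_def : e = sqrt (p ^ 2 + q ^ 2)) by (unfold p, q; rewrite !pow2_abs; exact he_eq).
  destruct (hypot_bounds p q hp hq) as [[hpe heq] hpq]. rewrite <- he_def in *.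
  assert (hf : Rabs f / 2 = p / Rabs D).
  { unfold p. rewrite Rabs_div, Rabs_mult, (Rabs_pos_eq 2) by lra. field. lra. }
  assert (ha : Rabs (D * f ^ 2 / (4 * e)) = p ^ 2 / (Rabs D * e)).
  { replace (D * f ^ 2 / (4 * e)) with ((D * f / 2) ^ 2 / (D * e)) by (field; lra).
    rewrite Rabs_div, Rabs_mult, (Rabs_pos_eq e) by lra.
    rewrite (Rabs_pos_eq (_ ^ 2)) by apply pow2_ge_0.
    unfold p. rewrite pow2_abs. reflexivity. }
  assert (hxi : Rabs (- c * f / (2 * e ^ 2)) = q * p / (Rabs D * e ^ 2)).
  { replace (- c * f / (2 * e ^ 2)) with (- c * (D * f / 2) / (D * e ^ 2)) by (field; lra).
    rewrite Rabs_div, !Rabs_mult, Rabs_Ropp, (Rabs_pos_eq (e ^ 2)) by nra. reflexivity. }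
  rewrite hf, ha, hxi. repeat split.
  - apply Rmult_le_reg_r with (Rabs D * e); [nra|].
    field_simplify; [|lra..]. destruct (Rle_dec q p); nra.
  - apply Rmult_le_reg_r with (Rabs D * e); [nra|].
    field_simplify; [nra|lra..].
  - assert (he2 : 0 < e ^ 2) by nra.
    apply Rmult_le_reg_r with (2 * Rabs D * e ^ 2); [nra|].
    field_simplify; [nra|lra..].
Qed.

Lemma coupling_bound J mu k : Rabs (J * cos k + mu) <= Rabs J + Rabs mu.
Proof.
  eapply Rle_trans; [apply Rabs_triang|]. rewrite Rabs_mult.
  assert (hcos : Rabs (cos k) <= 1) by (apply Rabs_le; apply COS_bound).
  assert (hJ := Rabs_pos J). nra.
Qed.

Definition mode_bound (J mu D T : R) : R :=
  T * (Rabs J + Rabs mu) / Rabs D + / (2 * Rabs D).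

(* C >= 0, needed for the modes with epsilon(k) = 0, whose deviation is 0. *)
Lemma mode_bound_nonneg J mu D T : D <> 0 -> 0 <= T -> 0 <= mode_bound J mu D T.
Proof.
  intros hD hT. assert (hDp : 0 < Rabs D) by (apply Rabs_pos_lt; exact hD).
  assert (hJ := Rabs_pos J). assert (hmu := Rabs_pos mu).
  unfold mode_bound. apply Rplus_le_le_0_compat.
  - unfold Rdiv. apply Rmult_le_pos; [nra | left; apply Rinv_0_lt_compat; exact hDp].
  - left. apply Rinv_0_lt_compat. lra.
Qed.

Lemma EDelta_mode_bound J mu D T kappa N k : D <> 0 -> 0 <= T ->
  0 < eps J mu D kappa N k ->
  Rabs (EDelta J mu D T kappa N k - T / 2 * Rabs (fN kappa N k)) <= mode_bound J mu D T.
Proof.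
  intros hD hT he.
  assert (hDp : 0 < Rabs D) by (apply Rabs_pos_lt; exact hD).
  unfold EDelta, aD, xiD, mode_bound.
  set (f := fN kappa N k) in *. set (e := eps J mu D kappa N k) in *.
  destruct (Delta_mode_bounds D f (J * cos k + mu) e hD eq_refl he) as [[ha_lo ha_hi] hxi].
  destruct (scrE_bounds T (D * f ^ 2 / (4 * e)) (- (J * cos k + mu) * f / (2 * e ^ 2)) e hT)
    as [hE_lo hE_hi].
  assert (hc : T * (Rabs (J * cos k + mu) / Rabs D) <= T * (Rabs J + Rabs mu) / Rabs D).
  { unfold Rdiv. rewrite <- Rmult_assoc. apply Rmult_le_compat_r.
    - left. apply Rinv_0_lt_compat. exact hDp.
    - apply Rmult_le_compat_l; [exact hT | apply coupling_bound]. }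
  apply Rabs_le. split; nra.
Qed.

(* A mode with epsilon(k) = 0 has f_N(k) = 0, since epsilon >= |Delta f_N/2|. *)
Lemma fN_zero_of_eps_nonpos J mu D kappa N k : D <> 0 ->
  ~ 0 < eps J mu D kappa N k -> fN kappa N k = 0.
Proof.
  intros hD hnpos. unfold eps in hnpos.
  destruct (hypot_bounds (Rabs (D * fN kappa N k / 2)) (Rabs (J * cos k + mu)))
    as [[hlo _] _]; try apply Rabs_pos.
  rewrite !pow2_abs in hlo.
  assert (hprod : D * fN kappa N k = 0).
  { destruct (Req_dec (D * fN kappa N k) 0) as [h | h]; [exact h | exfalso].
    apply (Rabs_no_R0 (D * fN kappa N k / 2)); [lra |].
    assert (h0 := Rabs_pos (D * fN kappa N k / 2)). lra. }
  destruct (Rmult_integral D (fN kappa N k) hprod); [contradiction | assumption].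
Qed.

Lemma sum0_nonneg (g : nat -> R) m : (forall n, (n < m)%nat -> 0 <= g n) -> 0 <= sum0 g m.
Proof.
  induction m as [|m IH]; intros hg; simpl; [lra|].
  apply Rplus_le_le_0_compat; [apply IH; intros n hn | apply hg]; auto with arith.
Qed.

Lemma sum0_scale c (h : nat -> R) m : sum0 (fun n => c * h n) m = c * sum0 h m.
Proof. induction m as [|m IH]; simpl; [ring | rewrite IH; ring]. Qed.

Lemma sum0_deviation (g h : nat -> R) C m :
  (forall n, (n < m)%nat -> Rabs (g n - h n) <= C) ->
  Rabs (sum0 g m - sum0 h m) <= C * INR m.
Proof.
  induction m as [|m IH]; intros hgh; cbn [sum0].
  - rewrite Rminus_0_r, Rabs_R0. simpl. lra.
  - replace (sum0 g m + g m - (sum0 h m + h m))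
      with ((sum0 g m - sum0 h m) + (g m - h m)) by ring.
    eapply Rle_trans; [apply Rabs_triang|].
    assert (IHm := IH (fun n hn => hgh n (Nat.lt_lt_succ_r _ _ hn))).
    assert (hm := hgh m (Nat.lt_succ_diag_r m)).
    rewrite S_INR. lra.
Qed.

Theorem mainTheorem9 (J mu D T : R) (hD : D <> 0) (hT : 0 < T) :
  exists C : R,
    forall kappa : nat -> R,
      (forall N : nat, Nat.Even N -> (4 <= N)%nat ->
         forall n : nat, (n < N)%nat ->
           0 < eps J mu D kappa N (kmom N n) ->
           Rabs (EDelta J mu D T kappa N (kmom N n)
                 - T / 2 * Rabs (fN kappa N (kmom N n))) <= C)
      /\
      (forall N : nat, Nat.Even N -> (4 <= N)%nat ->
         Rabs (sqrt (QFI J mu D T kappa N) - T * gammaN kappa N / 2) <= C * INR N).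
Proof.
  assert (hT0 : 0 <= T) by lra.
  exists (mode_bound J mu D T). intros kappa. split.
  - intros N _ _ n _ he. exact (EDelta_mode_bound J mu D T kappa N _ hD hT0 he).
  - intros N _ _.
    set (E := fun n => if Rlt_dec 0 (eps J mu D kappa N (kmom N n))
                       then EDelta J mu D T kappa N (kmom N n) else 0).
    assert (hE_nonneg : forall n, (n < N)%nat -> 0 <= E n).
    { intros n _. unfold E. destruct (Rlt_dec _ _); [apply sqrt_pos | lra]. }
    assert (hE_dev : forall n, (n < N)%nat ->
              Rabs (E n - T / 2 * Rabs (fN kappa N (kmom N n))) <= mode_bound J mu D T).
    { intros n _. unfold E. destruct (Rlt_dec _ _) as [he | he].
      - exact (EDelta_mode_bound J mu D T kappa N _ hD hT0 he).
      - rewrite (fN_zero_of_eps_nonpos J mu D kappa N _ hD he), Rabs_R0, Rmult_0_r,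
          Rminus_0_r, Rabs_R0.
        exact (mode_bound_nonneg J mu D T hD hT0). }
    replace (sqrt (QFI J mu D T kappa N)) with (sum0 E N)
      by (unfold QFI; rewrite sqrt_pow2; [reflexivity | exact (sum0_nonneg E N hE_nonneg)]).
    replace (T * gammaN kappa N / 2)
      with (sum0 (fun n => T / 2 * Rabs (fN kappa N (kmom N n))) N)
      by (rewrite sum0_scale; unfold gammaN; field).
    exact (sum0_deviation _ _ _ N hE_dev).
Qed.
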